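(* Let $(B,\cdot)$ be an algebra over a field $\mathbb K$ of characteristic $0$ which is $\rho$-associative, i.e. $(b_1 b_2) b_3 - b_3 (b_1 b_2)=0$ for all $b_1,b_2,b_3\in B$. Then the bracket $[x,y]=xy-yx$ makes $B$ an Acaa-algebra, and $(B,[\cdot,\cdot])$ is also a $2$-step nilpotent Lie algebra (i.e. $[[x,y],z]=0$ for all $x,y,z\in B$).
   Context: An Acaa-algebra over a field $\mathbb K$ of characteristic $0$ is a $\mathbb K$-vector space $A$ with a bilinear product $[\cdot,\cdot]$ which is anticommutative, $[x,y]=-[y,x]$, and satisfies $[x_1,[x_2,x_3]]=[x_2,[x_3,x_1]]$ for all $x_1,x_2,x_3\in A$. An algebra here is a vector space with a bilinear (not necessarily associative) product. *)

From HB Require Import structures.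
From mathcomp Require Import all_boot all_order all_algebra.
Set Implicit Arguments. Unset Strict Implicit. Unset Printing Implicit Defensive.
Import GRing.Theory.
Local Open Scope ring_scope.

Definition bilinear_prod (K : fieldType) (B : lmodType K) (p : B -> B -> B) :=
  (forall a x y z, p (a *: x + y) z = a *: p x z + p y z) /\
  (forall a x y z, p x (a *: y + z) = a *: p x y + p x z).

Definition rho_associative (K : fieldType) (B : lmodType K) (p : B -> B -> B) :=
  forall b1 b2 b3, p (p b1 b2) b3 - p b3 (p b1 b2) = 0.

Definition commutator (K : fieldType) (B : lmodType K) (p : B -> B -> B) :=
  fun x y => p x y - p y x.

Definition acaa_algebra (K : fieldType) (B : lmodType K) (br : B -> B -> B) :=
  [/\ bilinear_prod br,
      (forall x y, br x y = - br y x) &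
      (forall x1 x2 x3, br x1 (br x2 x3) = br x2 (br x3 x1))].

Definition lie_algebra (K : fieldType) (B : lmodType K) (br : B -> B -> B) :=
  [/\ bilinear_prod br,
      (forall x y, br x y = - br y x) &
      (forall x y z, br x (br y z) + br y (br z x) + br z (br x y) = 0)].

Definition two_step_nilpotent_lie (K : fieldType) (B : lmodType K)
  (br : B -> B -> B) :=
  lie_algebra br /\ (forall x y z, br (br x y) z = 0).

From mathcomp Require Import all_boot all_order all_algebra.
Local Open Scope ring_scope.
Import GRing.Theory.

(* rho-associativity says exactly that every product is central, so the
   commutator of a commutator [xy - yx, z] vanishes; anticommutativity then
   kills every double bracket, and both the Acaa identity and the Jacobi
   identity hold because all their terms are zero. *)

Section BilinearProduct.

Context {K : fieldType} {B : lmodType K} {mul : B -> B -> B}.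
Hypothesis mul_bilin : bilinear_prod mul.

Lemma bilinear_mulBl x y z : mul (x - y) z = mul x z - mul y z.
Proof.
case: mul_bilin => mulDl _.
by rewrite addrC -scaleN1r mulDl scaleN1r addrC.
Qed.

Lemma bilinear_mulBr x y z : mul x (y - z) = mul x y - mul x z.
Proof.
case: mul_bilin => _ mulDr.
by rewrite addrC -scaleN1r mulDr scaleN1r addrC.
Qed.

Lemma commutator_bilinear : bilinear_prod (commutator mul).
Proof.
case: mul_bilin => mulDl mulDr.
by split=> a x y z; rewrite /commutator mulDl mulDr scalerBr opprD addrACA.
Qed.

End BilinearProduct.

Lemma commutatorC {K : fieldType} {B : lmodType K} (mul : B -> B -> B) x y :
  commutator mul x y = - commutator mul y x.
Proof. by rewrite /commutator opprB. Qed.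

Section RhoAssociative.

Context {K : fieldType} {B : lmodType K} {mul : B -> B -> B}.
Hypotheses (mul_bilin : bilinear_prod mul) (mul_rho : rho_associative mul).

Lemma rho_associative_central x y z : mul (mul x y) z = mul z (mul x y).
Proof. by apply/eqP; rewrite -subr_eq0 mul_rho. Qed.

Lemma commutator_commutatorl x y z :
  commutator mul (commutator mul x y) z = 0.
Proof.
rewrite /commutator (bilinear_mulBl mul_bilin) (bilinear_mulBr mul_bilin).
by rewrite !rho_associative_central subrr.
Qed.

End RhoAssociative.

Section NilpotentBracket.

Context {K : fieldType} {B : lmodType K} {br : B -> B -> B}.
Hypotheses (br_bilin : bilinear_prod br)
  (brC : forall x y, br x y = - br y x)
  (br_brl : forall x y z, br (br x y) z = 0).

Lemma nilpotent_bracketr x y z : br x (br y z) = 0.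
Proof. by rewrite brC br_brl oppr0. Qed.

Lemma nilpotent_bracket_acaa : acaa_algebra br.
Proof. by split=> // x1 x2 x3; rewrite !nilpotent_bracketr. Qed.

Lemma nilpotent_bracket_two_step_nilpotent_lie : two_step_nilpotent_lie br.
Proof. by do 2!split=> //; move=> x y z; rewrite !nilpotent_bracketr !addr0. Qed.

End NilpotentBracket.

Theorem mainTheorem9 (K : fieldType) (charK0 : [pchar K] =i pred0)
  (B : lmodType K) (mul : B -> B -> B)
  (mul_bilin : bilinear_prod mul) (mul_rho : rho_associative mul) :
  acaa_algebra (commutator mul) /\ two_step_nilpotent_lie (commutator mul).
Proof.
have br_bilin := commutator_bilinear mul_bilin.
have br_brl := commutator_commutatorl mul_bilin mul_rho.
split.
- exact: nilpotent_bracket_acaa br_bilin (commutatorC mul) br_brl.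
- exact: nilpotent_bracket_two_step_nilpotent_lie br_bilin
    (commutatorC mul) br_brl.
Qed.
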